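(* For every $N$ there exists a positive integer $n$ with at least $N$ distinct prime factors such that $\gamma(X_n)\le\gamma_t(X_n)\le g(n)-2$.
   Context: For a positive integer $n$, $X_n$ is the graph on $\{0,\dots,n-1\}$ with $a,b$ adjacent iff $\gcd(a-b,n)=1$. The Jacobsthal function $g(n)$ is the least positive integer $m$ such that every set of $m$ consecutive integers contains an integer coprime to $n$. $\gamma(G)$ is the domination number (minimum size of a set $S$ such that every vertex is in $S$ or adjacent to a vertex of $S$); $\gamma_t(G)$ is the total domination number (minimum size of a set $S$ such that every vertex of $G$ is adjacent to some vertex of $S$). *)

From HB Require Import structures.
From mathcomp Require Import all_boot all_order all_algebra.
Set Implicit Arguments. Unset Strict Implicit. Unset Printing Implicit Defensive.
Import Order.TTheory GRing.Theory Num.Theory.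

Definition Xadj (n : nat) (a b : 'I_n) : bool :=
  (a != b) && coprimez ((a : nat)%:Z - (b : nat)%:Z) (n : nat)%:Z.

Definition dominating (n : nat) (S : {set 'I_n}) : Prop :=
  forall v : 'I_n, v \in S \/ exists2 s, s \in S & Xadj v s.

Definition total_dominating (n : nat) (S : {set 'I_n}) : Prop :=
  forall v : 'I_n, exists2 s, s \in S & Xadj v s.

Definition is_domination_number (n k : nat) : Prop :=
  (exists S : {set 'I_n}, dominating S /\ #|S| = k) /\
  (forall S : {set 'I_n}, dominating S -> k <= #|S|).

Definition is_total_domination_number (n k : nat) : Prop :=
  (exists S : {set 'I_n}, total_dominating S /\ #|S| = k) /\
  (forall S : {set 'I_n}, total_dominating S -> k <= #|S|).

Definition jac_prop (n m : nat) : Prop :=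
  forall a : int, exists i : nat, i < m /\ coprimez (a + i%:Z) n%:Z.

Definition is_jacobsthal (n m : nat) : Prop :=
  0 < m /\ jac_prop n m /\ (forall m', 0 < m' -> jac_prop n m' -> m <= m').

From HB Require Import structures.
From mathcomp Require Import all_boot all_order all_algebra.
From mathcomp Require Import zify ring.
From Stdlib Require Import Classical Wf_nat.
Set Implicit Arguments. Unset Strict Implicit. Unset Printing Implicit Defensive.
Import Order.TTheory GRing.Theory Num.Theory.

(* Take n = 30 * Q, with Q a product of 3 + 8c distinct primes exceeding 30(c + 1).
   Among 17 + 30c consecutive integers starting at a = 20 (mod 30) only 3 + 8c are
   coprime to 30, and by the Chinese remainder theorem a can be chosen so that each
   of these is divisible by its own prime of Q; hence g(n) >= 18 + 30c.  On the other
   hand the 16 residues of base30 together with the interval [30, 30(c + 1)) form a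
   total dominating set of X_n: every vertex v has at least 4 + 8c elements x of this
   set with v - x coprime to 30, while each prime of Q, being larger than all of them,
   divides v - x for at most one such x.  So gamma(X_n) <= gamma_t(X_n) <= 16 + 30c. *)

Lemma coprimezMDl (k a m : int) : coprimez (k * m + a)%R m = coprimez a m.
Proof. by rewrite /coprimez gcdzC gcdzMDl gcdzC. Qed.

Lemma dvdz_subn (p v x : nat) : (p%:Z %| (v%:Z - x%:Z)%R)%Z = (v == x %[mod p]).
Proof. by rewrite -eqz_mod_dvd !modz_nat eqz_nat. Qed.

Lemma coprime_prodr (I : eqType) (r : seq I) (f : I -> nat) m :
  {in r, forall i, coprime m (f i)} -> coprime m (\prod_(i <- r) f i).
Proof.
move=> co; rewrite big_seq; apply: (big_ind (coprime m)) => //.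
- exact: coprimen1.
- by move=> x y cx cy; rewrite coprimeMr cx cy.
Qed.

Lemma count_iota_periodic (f : pred nat) m s k :
  (forall x, f (x + m) = f x) -> count f (iota s (k * m)) = k * count f (iota 0 m).
Proof.
move=> per.
have shift t : count f (iota t m) = count f (iota 0 m).
  elim: t => // t <-; case: m per => // m per.
  rewrite [in RHS]/= -[m.+1]addn1 iotaD count_cat /= addn0 addnC.
  by rewrite addSnnS per.
elim: k s => // k IH s.
by rewrite mulSn iotaD count_cat shift IH.
Qed.

Lemma count_eqmod_le1 (p v : nat) (s : seq nat) :
  uniq s -> {in s, forall x, x < p} -> count (fun x => x == v %[mod p]) s <= 1.
Proof.
move=> us lts; rewrite (@eq_in_count _ _ (pred1 (v %% p))).
  by rewrite count_uniq_mem // leq_b1.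
by move=> x /lts ltxp; rewrite /= modn_small.
Qed.

Lemma count_has_le_size (T I : eqType) (s : seq T) (r : seq I) (p : I -> pred T) :
  {in r, forall i, count (p i) s <= 1} -> count (fun x => has (p^~ x) r) s <= size r.
Proof.
elim: r => [|i r IH] cnt /=; first by rewrite count_pred0.
apply: (@leq_trans (count (p i) s + count (fun x => has (p^~ x) r) s)).
  by rewrite -count_predUI leq_addr.
rewrite -add1n leq_add ?cnt ?mem_head // IH // => j jr.
by apply: cnt; rewrite inE jr orbT.
Qed.

Lemma count_ltn_has (T : Type) (a b : pred T) (s : seq T) :
  count b s < count a s -> has (fun x => a x && ~~ b x) s.
Proof.
elim: s => //= x s IH; case: (a x); case: (b x) => //= lt; apply: IH; lia.
Qed.

Lemma card_ord_mem n (s : seq nat) : #|[set x : 'I_n | val x \in s]| <= size s.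
Proof.
rewrite cardE -(size_map val); apply: uniq_leq_size.
  by rewrite map_inj_uniq ?enum_uniq //; exact: val_inj.
by move=> y /mapP [x]; rewrite mem_enum inE => xs ->.
Qed.

Lemma ex_least_nat (P : nat -> Prop) :
  (exists k, P k) -> exists k, P k /\ forall k', P k' -> k <= k'.
Proof.
move=> exP; have dP k : P k \/ ~ P k by exact: classic.
have [k [[Pk kmin] _]] := dec_inh_nat_subset_has_unique_least_element P dP exP.
by exists k; split=> // k' /kmin /ssrnat.leP.
Qed.

Lemma domination_numbers n (S : {set 'I_n}) : total_dominating S ->
  exists gd gt, [/\ is_domination_number n gd, is_total_domination_number n gt,
                    gd <= gt & gt <= #|S|].
Proof.
move=> tdS.
have [gt [[S0 [tdS0 <-]] gt_min]] :=
  ex_least_nat (ex_intro (fun k => exists T, total_dominating T /\ #|T| = k) _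
                         (ex_intro _ S (conj tdS erefl))).
have dS0 : dominating S0 by move=> v; right; exact: tdS0.
have [gd [[S1 [dS1 <-]] gd_min]] :=
  ex_least_nat (ex_intro (fun k => exists T, dominating T /\ #|T| = k) _
                         (ex_intro _ S0 (conj dS0 erefl))).
exists #|S1|, #|S0|; split.
- by split=> [|T dT]; [exists S1 | apply: gd_min; exists T].
- by split=> [|T tdT]; [exists S0 | apply: gt_min; exists T].
- by apply: gd_min; exists S0.
- by apply: gt_min; exists S.
Qed.

Lemma jac_prop_self n : 0 < n -> jac_prop n n.
Proof.
move=> n_gt0 a; set q := ((1 - a) %/ n)%Z; set r := ((1 - a) %% n)%Z.
have nz : (n%:Z != 0)%R by rewrite eqz_nat -lt0n.
have r_ge0 : (0 <= r)%R by exact: modz_ge0.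
exists `|r|%N; split; first by rewrite -ltz_nat gez0_abs // ltz_pmod.
have -> : (a + `|r|%N = - q * n + 1)%R.
  have E := divz_eq (1 - a) n; rewrite -/q -/r in E; rewrite gez0_abs //.
  clearbody q r; lia.
by rewrite coprimezMDl coprimezE coprime1n.
Qed.

Lemma jacobsthal_gt n m a : 0 < n ->
  (forall i, i < m -> ~~ coprime (a + i) n) -> exists g, is_jacobsthal n g /\ m < g.
Proof.
move=> n_gt0 run.
have [g [[g_gt0 jg] g_min]] :=
  ex_least_nat (ex_intro (fun k => 0 < k /\ jac_prop n k) _
                         (conj n_gt0 (jac_prop_self n_gt0))).
exists g; split; first by do 2!split=> //; move=> k k_gt0 jk; apply: g_min.
rewrite ltnNge; apply/negP => g_le_m.
have [i [ig]] := jg a; rewrite coprimezE /=; apply/negP.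
by apply: run; exact: leq_trans ig g_le_m.
Qed.

Lemma size_primes_geq (s : seq nat) n : 0 < n -> uniq s ->
  {in s, forall p, prime p && (p %| n)} -> size s <= size (primes n).
Proof.
move=> n_gt0 us sP; apply: uniq_leq_size => // p /sP /andP[pp pn].
by rewrite mem_primes pp n_gt0.
Qed.

Definition large_prime (B k : nat) : nat := iter k.+1 (fun p => s2val (prime_above p)) B.

Lemma large_prime_prime B k : prime (large_prime B k).
Proof. by rewrite /large_prime iterS; case: prime_above. Qed.

Lemma large_prime_ltS B k : large_prime B k < large_prime B k.+1.
Proof. by rewrite [large_prime B k.+1]/large_prime iterS; case: prime_above. Qed.

Lemma large_prime_gt B k : B < large_prime B k.
Proof.
elim: k => [|k IH]; first by rewrite /large_prime /=; case: prime_above.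
exact: ltn_trans IH (large_prime_ltS B k).
Qed.

Lemma large_prime_inj B : injective (large_prime B).
Proof.
have lt_mono : {homo large_prime B : i j / i < j}.
  by apply: homo_ltn; [exact: ltn_trans | exact: large_prime_ltS].
move=> i j Eij; case: (ltngtP i j) => // /lt_mono; by rewrite Eij ltnn.
Qed.

Lemma chinese_offsets (m b : nat) (f : nat -> nat) (l : seq nat) :
  uniq (map f l) -> {in l, forall i, prime (f i) && coprime m (f i)} ->
  exists a, a = b %[mod m] /\ {in l, forall i, f i %| a + i}.
Proof.
elim: l => [|i l IH] /=; first by exists b.
move=> /andP[fi_l ul] fP.
have /andP[pi co_mi] : prime (f i) && coprime m (f i) by apply: fP; exact: mem_head.
have fPl : {in l, forall k, prime (f k) && coprime m (f k)}.
  by move=> k kl; apply: fP; rewrite inE kl orbT.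
have [a0 [a0b a0l]] := IH ul fPl.
pose M := m * \prod_(k <- l) f k.
have coM : coprime M (f i).
  rewrite coprimeMl co_mi coprime_sym coprime_prodr // => k kl.
  have /andP[pk _] := fPl k kl.
  rewrite prime_coprime // dvdn_prime2 //; apply: contraNneq fi_l => ->.
  exact: map_f.
pose a := chinese M (f i) a0 (f i - i %% f i).
have aM : a = a0 %[mod M] by exact: chinese_modl.
have dvd_mod d : d %| M -> a = a0 %[mod d].
  by move=> dM; rewrite -(modn_dvdm a dM) aM modn_dvdm.
exists a; split; first by rewrite dvd_mod ?dvdn_mulr.
move=> k; rewrite inE => /predU1P[-> | kl].
  rewrite /dvdn -modnDml (chinese_modr coM) modnDml -modnDmr subnK ?modnn //.
  by rewrite ltnW // ltn_mod prime_gt0.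
have dk : f k %| M by rewrite dvdn_mull // (big_rem _ kl) dvdn_mulr.
by rewrite /dvdn -modnDml dvd_mod // modnDml; exact: a0l.
Qed.

Definition diff_coprime (m v x : nat) : bool := coprimez (v%:Z - x%:Z)%R m.

Lemma diff_coprime_mod m v x : diff_coprime m v x = diff_coprime m (v %% m) (x %% m).
Proof.
rewrite /diff_coprime -[RHS](coprimezMDl ((v %/ m)%:Z - (x %/ m)%:Z)).
congr coprimez; rewrite {1}(divn_eq v m) {1}(divn_eq x m) !PoszD !PoszM; ring.
Qed.

Lemma diff_coprime_modl m v x : diff_coprime m v x = diff_coprime m (v %% m) x.
Proof. by rewrite diff_coprime_mod [RHS]diff_coprime_mod modn_mod. Qed.

Lemma diff_coprime_periodic m v x : diff_coprime m v (x + m) = diff_coprime m v x.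
Proof. by rewrite diff_coprime_mod modnDr -diff_coprime_mod. Qed.

Definition base30 : seq nat := [:: 0; 1; 2; 3; 4; 5; 8; 12; 15; 16; 17; 18; 19; 20; 23; 27].

Lemma count_diff_coprime30 v : count (diff_coprime 30 v) (iota 0 30) = 8.
Proof.
rewrite (eq_count (diff_coprime_modl 30 v)).
have /allP : all (fun w => count (diff_coprime 30 w) (iota 0 30) == 8) (iota 0 30).
  by vm_compute.
by move=> /(_ (v %% 30)); rewrite mem_iota ltn_mod => /(_ isT)/eqP.
Qed.

Lemma base30_neighbours v :
  4 <= count (fun x => (x \in base30) && diff_coprime 30 v x) (iota 0 30).
Proof.
rewrite (eq_count (a2 := fun x => (x \in base30) && diff_coprime 30 (v %% 30) x)).
  have /allP : all (fun w => 4 <= count (fun x => (x \in base30) && diff_coprime 30 w x)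
                                      (iota 0 30)) (iota 0 30).
    by vm_compute.
  by move=> /(_ (v %% 30)); rewrite mem_iota ltn_mod => /(_ isT).
by move=> x; rewrite /= -diff_coprime_modl.
Qed.

Section Construction.

Variable c : nat.

Definition dom_list : seq nat := [seq x <- iota 0 (30 * c.+1) | (30 <= x) || (x \in base30)].

Definition run_length : nat := 17 + 30 * c.

Definition unsieved : seq nat := [seq i <- iota 0 run_length | coprime (20 + i) 30].

Local Notation P := (large_prime (30 * c.+1)).

Definition modulus : nat := 30 * \prod_(i <- unsieved) P i.

Lemma size_dom_list : size dom_list = 16 + 30 * c.
Proof.
rewrite size_filter mulnS iotaD count_cat; congr (_ + _).
rewrite (@eq_in_count _ _ predT) ?count_predT ?size_iota // => x.
by rewrite mem_iota => /andP[-> _].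
Qed.

Lemma size_unsieved : size unsieved = 3 + 8 * c.
Proof.
rewrite size_filter iotaD count_cat [30 * c]mulnC count_iota_periodic; last first.
  by move=> x; rewrite -coprime_modl addnA modnDr coprime_modl.
by rewrite mulnC.
Qed.

Lemma dom_list_lt x : x \in dom_list -> x < 30 * c.+1.
Proof. by rewrite mem_filter mem_iota => /andP[_ /andP[_ ->]]. Qed.

Lemma modulus_gt0 : 0 < modulus.
Proof.
by rewrite muln_gt0 prodn_gt0 // => i; rewrite prime_gt0 ?large_prime_prime.
Qed.

Lemma dom_list_neighbours v : 4 + 8 * c <= count (diff_coprime 30 v) dom_list.
Proof.
rewrite count_filter mulnS iotaD count_cat leq_add //.
  rewrite (@eq_in_count _ _ (fun x => (x \in base30) && diff_coprime 30 v x)).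
    exact: base30_neighbours.
  by move=> x; rewrite mem_iota /predI /= => lt30; rewrite leqNgt lt30 andbC.
rewrite (@eq_in_count _ _ (diff_coprime 30 v)).
  rewrite [30 * c]mulnC count_iota_periodic; last exact: diff_coprime_periodic.
  by rewrite count_diff_coprime30 mulnC.
by move=> x; rewrite mem_iota /predI /= => /andP[-> _]; rewrite andbT.
Qed.

Lemma uniq_unsieved : uniq unsieved.
Proof. by rewrite filter_uniq ?iota_uniq. Qed.

Lemma large_prime_dvd_modulus i : i \in unsieved -> P i %| modulus.
Proof. by move=> iU; rewrite dvdn_mull // (big_rem _ iU) dvdn_mulr. Qed.

Lemma dom_list_lt_modulus x : x \in dom_list -> x < modulus.
Proof.
have U3 : 3 \in unsieved by rewrite mem_filter mem_iota.
move=> /dom_list_lt/ltn_trans/(_ (large_prime_gt _ 3)) lt_x.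
by apply: leq_trans lt_x (dvdn_leq modulus_gt0 (large_prime_dvd_modulus U3)).
Qed.

Lemma Xadj_modulus (v x : 'I_modulus) : diff_coprime 30 v x ->
  {in unsieved, forall i, ~~ (x == v %[mod P i])} -> Xadj v x.
Proof.
move=> co30 coP; apply/andP; split.
  by apply: contraTneq co30 => ->; rewrite /diff_coprime subrr.
rewrite coprimezE /= coprimeMr; apply/andP; split; first exact: co30.
apply: coprime_prodr => i iU.
rewrite coprime_sym prime_coprime ?large_prime_prime //.
by rewrite -[_ %| _]/(P i %| (v%:Z - x%:Z)%R)%Z dvdz_subn eq_sym coP.
Qed.

Lemma dom_list_total_dominating :
  total_dominating [set x : 'I_modulus | val x \in dom_list].
Proof.
move=> v; pose bad x := has (fun i => x == v %[mod P i]) unsieved.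
have few_bad : count bad dom_list <= 3 + 8 * c.
  rewrite -size_unsieved; apply: count_has_le_size => i _.
  apply: count_eqmod_le1; first by rewrite filter_uniq ?iota_uniq.
  by move=> x /dom_list_lt/ltn_trans; apply; exact: large_prime_gt.
have [x xs /andP[co30 good]] : exists2 x, x \in dom_list & diff_coprime 30 v x && ~~ bad x.
  apply/hasP/count_ltn_has/(leq_trans _ (dom_list_neighbours v)).
  by rewrite addSn ltnS.
exists (Ordinal (dom_list_lt_modulus xs)); first by rewrite inE.
by apply: Xadj_modulus => // i iU; apply: contra good => xv; apply/hasP; exists i.
Qed.

Lemma modulus_run a : a = 20 %[mod 30] -> {in unsieved, forall i, P i %| a + i} ->
  forall i, i < run_length -> ~~ coprime (a + i) modulus.
Proof.
move=> a20 aP i lt_i; case co: (coprime (20 + i) 30).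
  have iU : i \in unsieved by rewrite mem_filter co mem_iota.
  apply/negP => /(coprime_dvdr (large_prime_dvd_modulus iU)).
  by rewrite coprime_sym prime_coprime ?large_prime_prime // aP.
by rewrite coprimeMr -coprime_modl -modnDml a20 modnDml coprime_modl co.
Qed.

Lemma modulus_run_exists :
  exists a, forall i, i < run_length -> ~~ coprime (a + i) modulus.
Proof.
have [a [a20 aP]] : exists a, a = 20 %[mod 30] /\ {in unsieved, forall i, P i %| a + i}.
  apply: chinese_offsets => [|i _].
    by rewrite map_inj_uniq ?uniq_unsieved //; exact: large_prime_inj.
  rewrite large_prime_prime coprime_sym prime_coprime ?large_prime_prime //.
  apply/negP => /(@dvdn_leq _ 30 isT); have := large_prime_gt (30 * c.+1) i; lia.
by exists a; exact: modulus_run.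
Qed.

Lemma size_primes_modulus : 3 + 8 * c <= size (primes modulus).
Proof.
rewrite -size_unsieved -(size_map P); apply: size_primes_geq modulus_gt0 _ _.
  by rewrite map_inj_uniq ?uniq_unsieved //; exact: large_prime_inj.
by move=> _ /mapP[i iU ->]; rewrite large_prime_prime large_prime_dvd_modulus.
Qed.

End Construction.

Theorem corollary3p2 :
  forall N : nat, exists n : nat,
    0 < n /\ N <= size (primes n) /\
    exists gd gt g : nat,
      [/\ is_domination_number n gd, is_total_domination_number n gt,
          is_jacobsthal n g, gd <= gt & gt + 2 <= g].
Proof.
move=> N.
have [gd [gt [gd_min gt_min gd_le_gt gt_le]]] :=
  domination_numbers (@dom_list_total_dominating N).
have [a run] := @modulus_run_exists N.
have [g [g_jac run_lt_g]] := jacobsthal_gt (@modulus_gt0 N) run.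
exists (modulus N); split; first exact: modulus_gt0.
split; first by apply: leq_trans (@size_primes_modulus N); lia.
exists gd, gt, g; split=> //.
have gt_small : gt <= 16 + 30 * N.
  by rewrite -size_dom_list; exact: leq_trans gt_le (card_ord_mem _ _).
by move: run_lt_g; rewrite /run_length; lia.
Qed.
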